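(* Let $(A,\to,1)$ be an algebra of type $(2,0)$ satisfying (Re), (M) and (Ex). Then $(A,\to,1)$ satisfies ( ** ) if and only if it satisfies (Tr).
   Context: Properties, required for all $x,y,z\in A$: (Re) $x\to x=1$; (M) $1\to x=x$; (Ex) $x\to(y\to z)=y\to(x\to z)$; ( ** ) $y\to z=1$ implies $(z\to x)\to(y\to x)=1$; (Tr) $x\to y=1$ and $y\to z=1$ imply $x\to z=1$. *)

Definition prop_Re {A : Type} (imp : A -> A -> A) (one : A) : Prop :=
  forall x : A, imp x x = one.

Definition prop_M {A : Type} (imp : A -> A -> A) (one : A) : Prop :=
  forall x : A, imp one x = x.

Definition prop_Ex {A : Type} (imp : A -> A -> A) : Prop :=
  forall x y z : A, imp x (imp y z) = imp y (imp x z).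

Definition prop_StarStar {A : Type} (imp : A -> A -> A) (one : A) : Prop :=
  forall x y z : A, imp y z = one -> imp (imp z x) (imp y x) = one.

Definition prop_Tr {A : Type} (imp : A -> A -> A) (one : A) : Prop :=
  forall x y z : A, imp x y = one -> imp y z = one -> imp x z = one.


Section ImplicationAlgebra.

Variables (A : Type) (imp : A -> A -> A) (one : A).

Lemma imp_modus_ponens :
  prop_Re imp one -> prop_Ex imp -> forall x y : A, imp x (imp (imp x y) y) = one.
Proof.
  intros HRe HEx x y.
  rewrite HEx.
  apply HRe.
Qed.

(* Instantiate (**) at (z, x, y): its premise becomes 1 -> (x -> z), i.e. x -> z. *)
Lemma StarStar_Tr : prop_M imp one -> prop_StarStar imp one -> prop_Tr imp one.
Proof.
  intros HM HSS x y z Hxy Hyz.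
  pose proof (HSS z x y Hxy) as Hxz.
  rewrite Hyz, HM in Hxz.
  exact Hxz.
Qed.

(* By (Ex), (z -> x) -> (y -> x) = y -> ((z -> x) -> x); chain y <= z <= (z -> x) -> x. *)
Lemma Tr_StarStar :
  prop_Re imp one -> prop_Ex imp -> prop_Tr imp one -> prop_StarStar imp one.
Proof.
  intros HRe HEx HTr x y z Hyz.
  rewrite HEx.
  apply (HTr y z).
  - exact Hyz.
  - apply imp_modus_ponens; assumption.
Qed.

End ImplicationAlgebra.

Theorem theorem2p3 (A : Type) (imp : A -> A -> A) (one : A)
  (HRe : prop_Re imp one) (HM : prop_M imp one) (HEx : prop_Ex imp) :
  prop_StarStar imp one <-> prop_Tr imp one.
Proof.
  split.
  - exact (StarStar_Tr A imp one HM).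
  - exact (Tr_StarStar A imp one HRe HEx).
Qed.
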